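(* Let $G$ be a Borel groupoid which is the increasing union of a sequence $(G_n)$ of proper Borel subgroupoids. Then $G$ is Borel amenable.
   Context: All Borel spaces are analytic. For a Borel groupoid $H$ with $H$ acting on itself by left multiplication and on $H^{(0)}$ by $\gamma\cdot s(\gamma)=r(\gamma)$: $H$ is proper if there is a Borel system $\{m^u\}_{u\in H^{(0)}}$ of probability measures, $m^u$ supported on $H^u=r^{-1}(u)$, $u\mapsto\int f\,dm^u$ Borel for nonnegative Borel $f$, with $\gamma\cdot m^{s(\gamma)}=m^{r(\gamma)}$. $G$ is Borel amenable if there is a sequence of such Borel systems $m_n$ of probability measures on $G$ with $\|\gamma\cdot m_n^{s(\gamma)}-m_n^{r(\gamma)}\|_1\to0$ for every $\gamma\in G$ (total variation norm). *)

From HB Require Import structures.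
From mathcomp Require Import all_boot all_order all_algebra.
From mathcomp Require Import all_classical all_reals all_analysis measurable_realfun.
Set Implicit Arguments. Unset Strict Implicit. Unset Printing Implicit Defensive.
Import Order.TTheory GRing.Theory Num.Theory.
Local Open Scope classical_set_scope.
Local Open Scope ring_scope.

Definition analytic_subset (R : realType) (A : set R) : Prop :=
  exists B : set (R * R)%type, measurable B /\ A = fst @` B.

(* A measurable space is an analytic Borel space iff it is Borel-isomorphic to
   an analytic subset of ℝ with its relative Borel structure. *)
Definition analytic_space d (T : measurableType d) : Prop :=
  exists (R : realType) (phi : T -> R),
    injective phi /\ analytic_subset (range phi) /\
    (forall E : set T, measurable E <-> exists B : set R, measurable B /\ E = phi @^-1` B).

(* Every element of the carrier T is an arrow; units are the u with rng u = u. *)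
Record borel_groupoid d (T : measurableType d) := BorelGroupoid {
  src : T -> T;
  rng : T -> T;
  mul : T -> T -> T;   (* mul x y = x y, meaningful when src x = rng y *)
  inv : T -> T;
  rng_rng : forall x, rng (rng x) = rng x;
  src_rng : forall x, src (rng x) = rng x;
  rng_src : forall x, rng (src x) = src x;
  src_src : forall x, src (src x) = src x;
  rng_mul : forall x y, src x = rng y -> rng (mul x y) = rng x;
  src_mul : forall x y, src x = rng y -> src (mul x y) = src y;
  mulA : forall x y z, src x = rng y -> src y = rng z ->
    mul (mul x y) z = mul x (mul y z);
  mul_rng : forall x, mul (rng x) x = x;
  mul_src : forall x, mul x (src x) = x;
  rng_inv : forall x, rng (inv x) = src x;
  src_inv : forall x, src (inv x) = rng x;
  mulV : forall x, mul x (inv x) = rng x;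
  mulVx : forall x, mul (inv x) x = src x;
  meas_units : measurable [set u : T | rng u = u];
  meas_src : measurable_fun setT src;
  meas_rng : measurable_fun setT rng;
  meas_inv : measurable_fun setT inv;
  meas_G2 : measurable [set p : (T * T)%type | src p.1 = rng p.2];
  meas_mul : measurable_fun [set p : (T * T)%type | src p.1 = rng p.2]
               (fun p => mul p.1 p.2)
}.

Section Amen.
Context d (T : measurableType d) (R : realType) (G : borel_groupoid T).
Local Notation s := (src G).
Local Notation r := (rng G).
Local Notation mul := (mul G).

Definition borel_subgroupoid (H : set T) : Prop :=
  measurable H /\ (forall x, H x -> H (inv G x)) /\
  (forall x y, H x -> H y -> s x = r y -> H (mul x y)).

Definition unit_space (H : set T) : set T := [set u | H u /\ r u = u].

Definition fiber (H : set T) (u : T) : set T := [set x | H x /\ r x = u].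

Definition translate (g : T) (mu : set T -> \bar R) : set T -> \bar R :=
  fun E => mu [set x | r x = s g /\ E (mul g x)].

(* Borel system of probability measures {m^u}_{u in H^(0)} on H (each m^u is
   a measure on G, concentrated on H^u) *)
Definition borel_system (H : set T) (m : T -> {measure set T -> \bar R}) : Prop :=
  (forall u, unit_space H u -> m u setT = 1%E) /\
  (forall u, unit_space H u -> m u (~` fiber H u) = 0%E) /\
  (forall f : T -> \bar R, measurable_fun setT f -> (forall x, 0 <= f x)%E ->
     measurable_fun (unit_space H) (fun u => (\int[m u]_x f x)%E)).

Definition proper_subgroupoid (H : set T) : Prop :=
  exists m : T -> {measure set T -> \bar R}, borel_system H m /\
    forall g, H g -> forall E, measurable E ->
      translate g (m (s g)) E = m (r g) E.

Definition tv_norm (mu nu : set T -> \bar R) : \bar R :=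
  ereal_sup [set t : \bar R | exists (n : nat) (E : nat -> set T),
     (forall i, measurable (E i)) /\ trivIset `I_n E /\
     \bigcup_(i in `I_n) E i = setT /\
     t = (\sum_(i < n) `|mu (E i) - nu (E i)|)%E].

Definition borel_amenable : Prop :=
  exists m : nat -> T -> {measure set T -> \bar R},
    (forall n, borel_system setT (m n)) /\
    forall g, (fun n => tv_norm (translate g (m n (s g))) (m n (r g))) @ \oo
              --> 0%E.

End Amen.

From mathcomp Require Import all_boot all_order all_algebra.
From mathcomp Require Import all_classical all_reals all_analysis measurable_realfun.
Set Implicit Arguments. Unset Strict Implicit. Unset Printing Implicit Defensive.
Import Order.TTheory GRing.Theory Num.Theory.
Local Open Scope classical_set_scope.
Local Open Scope ring_scope.

(* Extend the invariant system of G_n from its unit space to all units of G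
   by Dirac masses. Each arrow g lies in G_n for all large n, and from then on
   the extended system is exactly invariant at g, so the total variation
   distance in the definition of amenability is eventually 0. *)

Lemma analytic_space_measurable_set1 d (T : measurableType d) :
  analytic_space T -> forall u : T, measurable [set u].
Proof.
case=> R [phi [phiI [_ measurableE]]] u.
apply/measurableE; exists [set phi u]; split; first exact: measurable_set1.
by apply/seteqP; split=> x /=; [move->|move/phiI].
Qed.

Lemma nondecreasing_cover_near (T : Type) (A : nat -> set T) :
  (forall n, A n `<=` A n.+1) -> \bigcup_n A n = setT ->
  forall x, \forall n \near \oo, A n x.
Proof.
move=> incrA coverA x.
have [N _ ANx] : (\bigcup_n A n) x by rewrite coverA.
exists N => // n /= /subnK <-; elim: (n - N)%N => [//|k IHk].
by rewrite addSn; apply: incrA.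
Qed.

Section tv_norm.
Context d (T : measurableType d) (R : realType).

Lemma tv_norm_eq0 (mu : set T -> \bar R) (nu : {measure set T -> \bar R}) :
  nu setT \is a fin_num -> (forall E, measurable E -> mu E = nu E) ->
  tv_norm mu nu = 0%E.
Proof.
move=> nuT_fin munu.
have nu_fin E : measurable E -> nu E \is a fin_num.
  move=> mE; rewrite ge0_fin_numE ?measure_ge0 //.
  apply: (le_lt_trans (y := nu setT)); first by rewrite le_measure ?inE.
  by rewrite ltey_eq nuT_fin.
have sum0 n (E : nat -> set T) : (forall i, measurable (E i)) ->
    (\sum_(i < n) `|mu (E i) - nu (E i)|)%E = 0%E.
  by move=> mE; rewrite big1 // => i _; rewrite munu // subee ?nu_fin // abse0.
rewrite /tv_norm -[X in _ = X]ereal_sup1.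
congr ereal_sup.
apply/seteqP; split=> t /=.
  by move=> [n [E [mE [_ [_ ->]]]]]; rewrite sum0.
move=> ->; exists 1%N, (fun _ => setT); split=> //; split.
  rewrite (_ : `I_1 = [set 0%N]); first exact: trivIset1.
  by apply/seteqP; split=> x /=; case: x.
split; last by rewrite (sum0 1%N (fun=> setT)).
by apply/seteqP; split=> // x _; exists 0%N.
Qed.
End tv_norm.

Section dirac_extension.
Context d (T : measurableType d) (R : realType) (G : borel_groupoid T).

Lemma borel_subgroupoid_src (H : set T) g :
  borel_subgroupoid G H -> H g -> H (src G g).
Proof.
move=> [_ [HV HM]] Hg; rewrite -(mulVx G g).
by apply: HM; rewrite ?src_inv //; apply: HV.
Qed.

Lemma borel_subgroupoid_rng (H : set T) g :
  borel_subgroupoid G H -> H g -> H (rng G g).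
Proof.
move=> [_ [HV HM]] Hg; rewrite -(mulV G g).
by apply: HM; rewrite ?rng_inv //; apply: HV.
Qed.

Hypothesis measurable_points : forall u : T, measurable [set u].

Lemma measurable_fiberT u : measurable (fiber G setT u).
Proof.
rewrite (_ : fiber G setT u = setT `&` rng G @^-1` [set u]).
  exact: meas_rng.
by apply/seteqP; split=> x; rewrite /fiber /=; tauto.
Qed.

Lemma measurable_unit_spaceT : measurable (unit_space G setT).
Proof.
rewrite (_ : unit_space G setT = [set u | rng G u = u]); first exact: meas_units.
by apply/seteqP; split=> x /=; [case|].
Qed.

Variables (H : set T) (m : T -> {measure set T -> \bar R}).
Hypotheses (mH : measurable H) (msys : borel_system G H m).

Definition dirac_extension (u : T) : {measure set T -> \bar R} :=
  if pselect (H u) then m u else \d_u.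

Lemma dirac_extension_in u : H u -> dirac_extension u = m u.
Proof. by rewrite /dirac_extension; case: pselect. Qed.

Lemma dirac_extension_notin u : ~ H u -> dirac_extension u = \d_u.
Proof. by rewrite /dirac_extension; case: pselect. Qed.

Lemma dirac_extensionT u : unit_space G setT u -> dirac_extension u setT = 1%E.
Proof.
move=> [_ ru]; have [Hu|Hu] := pselect (H u).
  by rewrite dirac_extension_in //; apply: msys.1.
by rewrite dirac_extension_notin //; exact: diracT.
Qed.

Lemma dirac_extension_fiberC u :
  unit_space G setT u -> dirac_extension u (~` fiber G setT u) = 0%E.
Proof.
move=> [_ ru]; have [Hu|Hu] := pselect (H u); last first.
  by rewrite dirac_extension_notin //= diracE memNset //; case.
rewrite dirac_extension_in //.
apply: (subset_measure0 _ _ _ (msys.2.1 u _)) => //.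
- exact/measurableC/measurable_fiberT.
- apply: measurableC; rewrite (_ : fiber G H u = H `&` fiber G setT u).
    exact/measurableI/measurable_fiberT.
  by apply/seteqP; split=> x; rewrite /fiber /=; tauto.
- by move=> x /= notfib [_ rx]; apply: notfib.
Qed.

Lemma measurable_dirac_extension_integral (f : T -> \bar R) :
  measurable_fun setT f -> (forall x, 0 <= f x)%E ->
  measurable_fun (unit_space G setT) (fun u => \int[dirac_extension u]_x f x)%E.
Proof.
move=> mf f0.
have mU := measurable_unit_spaceT.
have -> : unit_space G setT =
    (unit_space G setT `&` H) `|` (unit_space G setT `&` ~` H).
  by rewrite -setIUr setUCr setIT.
have mUH : measurable (unit_space G setT `&` H) by exact: measurableI.
have mUHC : measurable (unit_space G setT `&` ~` H).
  by apply: measurableI => //; exact: measurableC.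
apply/measurable_funU => //; split.
  rewrite (_ : _ `&` H = unit_space G H); last first.
    by apply/seteqP; split=> x /=; [case=> -[]|case=> ? ?].
  apply: eq_measurable_fun (msys.2.2 f mf f0).
  by move=> u /[1!inE] -[Hu _]; rewrite dirac_extension_in.
apply: (@eq_measurable_fun _ _ _ _ _ f); last exact: measurable_funS mf.
move=> u /[1!inE] -[_ Hu]; rewrite dirac_extension_notin //=.
by rewrite integral_dirac // diracT mul1e.
Qed.

Lemma borel_system_dirac_extension : borel_system G setT dirac_extension.
Proof.
split; first exact: dirac_extensionT.
split; first exact: dirac_extension_fiberC.
exact: measurable_dirac_extension_integral.
Qed.

End dirac_extension.

Theorem lemma2p8 (d : measure_display) (T : measurableType d) (R : realType)
  (hT : analytic_space T) (G : borel_groupoid T) (Gn : nat -> set T)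
  (hsub : forall n, borel_subgroupoid G (Gn n))
  (hprop : forall n, proper_subgroupoid R G (Gn n))
  (hincr : forall n, Gn n `<=` Gn n.+1)
  (hunion : \bigcup_n Gn n = setT) :
  borel_amenable R G.
Proof.
have [M hM] := choice hprop.
have mpoints := analytic_space_measurable_set1 hT.
exists (fun n => dirac_extension (Gn n) (M n)); split.
  move=> n /=; exact: (borel_system_dirac_extension mpoints (hsub n).1 (hM n).1).
move=> g; apply: cvg_near_cst.
near=> n.
have Gg : Gn n g by near: n; exact: nondecreasing_cover_near.
have [[M1 _] Minv] := hM n.
have Gs := borel_subgroupoid_src (hsub n) Gg.
have Gr := borel_subgroupoid_rng (hsub n) Gg.
rewrite !dirac_extension_in //; apply: tv_norm_eq0; last exact: Minv.
by rewrite M1 //; split=> //; rewrite rng_rng.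
Unshelve. all: by end_near.
Qed.
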